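(* Let $F:\mathcal C\to\mathcal D$ be a left multiadjoint and let $\mathcal M$ be a composable class of morphisms in $\mathcal D$. Suppose $\perp$ is an independence relation on $\mathcal D_{\mathcal M}$ that satisfies existence and that, regarded as an independence relation on $\mathcal D$, satisfies semi-invariance. Then $F^{-1}(\perp)$, as an independence relation on $\mathcal C_{F^{-1}(\mathcal M)}$, satisfies existence, where $F^{-1}(\mathcal M)$ is the class of morphisms $f$ of $\mathcal C$ with $F(f)\in\mathcal M$.
   Context: A class $\mathcal M$ of morphisms is composable if it is closed under composition and contains all isomorphisms; $\mathcal D_{\mathcal M}$ is the subcategory with all objects and morphisms in $\mathcal M$. A functor $F$ is a left multiadjoint if for every object $D$ of $\mathcal D$ there is a family $\{e_k:F(C_k)\to D\}_{k\in K}$ such that every $e:F(C)\to D$ factors as $e=e_kF(f)$ for a unique $k$ and unique $f:C\to C_k$. A commuting square consists of objects $C,A,B,M$ and morphisms $C\to A$, $C\to B$, $A\to M$, $B\to M$ with equal composites $C\to M$. An independence relation is a class of commuting squares (called independent); write $A\perp^M_C B$. $F^{-1}(\perp)$ consists of the commuting squares whose image under $F$ is in $\perp$. Existence: every span $A\leftarrow C\to B$ can be completed to an independent square. Semi-invariance: for a commuting square $C\to A$, $C\to B$, $A\to M$, $B\to M$ and any $M\to N$, if the square with $A\to M\to N$, $B\to M\to N$ is independent then the square with $A\to M$, $B\to M$ is independent. *)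

Set Implicit Arguments.
Unset Strict Implicit.

(* A category; [comp g f] is g ∘ f (first f, then g). *)
Record Category := {
  Obj :> Type;
  Hom : Obj -> Obj -> Type;
  id : forall A, Hom A A;
  comp : forall A B C, Hom B C -> Hom A B -> Hom A C;
  comp_id_l : forall A B (f : Hom A B), comp (id B) f = f;
  comp_id_r : forall A B (f : Hom A B), comp f (id A) = f;
  comp_assoc : forall A B C D (f : Hom A B) (g : Hom B C) (h : Hom C D),
      comp h (comp g f) = comp (comp h g) f
}.
Arguments Hom {c} _ _.
Arguments id {c} _.
Arguments comp {c A B C} _ _.

Record Functor (C D : Category) := {
  fobj :> C -> D;
  fmap : forall A B, @Hom C A B -> @Hom D (fobj A) (fobj B);
  fmap_id : forall A, fmap (id A) = id (fobj A);
  fmap_comp : forall A B E (f : @Hom C A B) (g : @Hom C B E),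
      fmap (comp g f) = comp (fmap g) (fmap f)
}.
Arguments fmap {C D} f0 {A B} _.

Definition is_iso {D : Category} {A B : D} (f : Hom A B) : Prop :=
  exists g : Hom B A, comp g f = id A /\ comp f g = id B.

Definition morclass (D : Category) := forall A B : D, @Hom D A B -> Prop.

Definition composable {D : Category} (M : morclass D) : Prop :=
  (forall (A B E : D) (f : Hom A B) (g : Hom B E), M _ _ f -> M _ _ g -> M _ _ (comp g f))
  /\ (forall (A B : D) (f : Hom A B), is_iso f -> M _ _ f).

Definition preimage_class {C D : Category} (F : Functor C D) (M : morclass D) : morclass C :=
  fun A B f => M _ _ (fmap F f).

Definition left_multiadjoint {C D : Category} (F : Functor C D) : Prop :=
  forall X : D, exists (K : Type) (Ck : K -> C) (e : forall k, @Hom D (F (Ck k)) X),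
    forall (Y : C) (f : @Hom D (F Y) X),
      exists! p : {k : K & @Hom C Y (Ck k)}, f = comp (e (projT1 p)) (fmap F (projT2 p)).

Definition sqclass (D : Category) :=
  forall (C A B M : D), Hom C A -> Hom C B -> Hom A M -> Hom B M -> Prop.

Definition commutes {D : Category} {C A B M : D}
  (f : Hom C A) (g : Hom C B) (h : Hom A M) (k : Hom B M) : Prop :=
  comp h f = comp k g.

Definition indep_rel_on {D : Category} (M : morclass D) (indep : sqclass D) : Prop :=
  forall (C A B P : D) (f : Hom C A) (g : Hom C B) (h : Hom A P) (k : Hom B P),
    indep _ _ _ _ f g h k ->
    commutes f g h k /\ M _ _ f /\ M _ _ g /\ M _ _ h /\ M _ _ k.

Definition existence_on {D : Category} (M : morclass D) (indep : sqclass D) : Prop :=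
  forall (C A B : D) (f : Hom C A) (g : Hom C B), M _ _ f -> M _ _ g ->
    exists (P : D) (h : Hom A P) (k : Hom B P),
      M _ _ h /\ M _ _ k /\ indep _ _ _ _ f g h k.

Definition semi_invariance {D : Category} (indep : sqclass D) : Prop :=
  forall (C A B P N : D) (f : Hom C A) (g : Hom C B) (h : Hom A P) (k : Hom B P)
    (n : Hom P N),
    commutes f g h k -> indep _ _ _ _ f g (comp n h) (comp n k) -> indep _ _ _ _ f g h k.

Definition preimage_indep {C D : Category} (F : Functor C D) (indep : sqclass D) : sqclass C :=
  fun X A B P f g h k =>
    commutes f g h k /\ indep _ _ _ _ (fmap F f) (fmap F g) (fmap F h) (fmap F k).

From Stdlib Require Import Eqdep.

(* Complete a span F A <- F X -> F B to an independent square with vertex P.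
   Both legs A -> P and B -> P factor through the multiadjoint cone at P, and,
   since the square commutes, the two composites out of X have the same
   factorization; uniqueness forces both legs through the same component C_k,
   giving a commuting square in C.  Semi-invariance, applied with the cone
   morphism e_k, makes its image independent, and the independence relation
   lives in D_M, so its legs are in M. *)

Section LeftMultiadjoint.

Context {C D : Category} (F : Functor C D).

Lemma fmap_commutes {X A B Q : C} {f : Hom X A} {g : Hom X B}
  {a : Hom A Q} {b : Hom B Q} :
  commutes f g a b -> commutes (fmap F f) (fmap F g) (fmap F a) (fmap F b).
Proof.
  unfold commutes. intros Hc. rewrite <- !fmap_comp, Hc. reflexivity.
Qed.

Lemma left_multiadjoint_lift_square (HF : left_multiadjoint F)
  {X A B : C} {P : D} {f : Hom X A} {g : Hom X B}
  {h : Hom (F A) P} {k : Hom (F B) P} :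
  commutes (fmap F f) (fmap F g) h k ->
  exists (Q : C) (n : Hom (F Q) P) (a : Hom A Q) (b : Hom B Q),
    commutes f g a b /\ h = comp n (fmap F a) /\ k = comp n (fmap F b).
Proof.
  intros Hc.
  destruct (HF P) as [K [Ck [e He]]].
  destruct (He A h) as [[i a] [Ha _]].
  destruct (He B k) as [[j b] [Hb _]].
  simpl in Ha, Hb.
  destruct (He X (comp h (fmap F f))) as [p [_ Huniq]].
  assert (Hpa : p = existT _ i (comp a f)).
  { apply Huniq. simpl. rewrite Ha, fmap_comp, comp_assoc. reflexivity. }
  assert (Hpb : p = existT _ j (comp b g)).
  { apply Huniq. simpl. unfold commutes in Hc.
    rewrite Hc, Hb, fmap_comp, comp_assoc. reflexivity. }
  rewrite Hpa in Hpb.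
  assert (Hij : i = j) by exact (f_equal (@projT1 _ _) Hpb).
  subst j.
  exists (Ck i), (e i), a, b.
  repeat split; [exact (inj_pair2 _ _ _ _ _ Hpb) | exact Ha | exact Hb].
Qed.

End LeftMultiadjoint.

Theorem theorem5p3 (C D : Category) (F : Functor C D) (M : morclass D)
  (indep : sqclass D) :
  left_multiadjoint F ->
  composable M ->
  indep_rel_on M indep ->
  existence_on M indep ->
  semi_invariance indep ->
  existence_on (preimage_class F M) (preimage_indep F indep).
Proof.
  intros HF _ Hrel Hex Hsemi X A B f g Mf Mg.
  destruct (Hex _ _ _ _ _ Mf Mg) as [P [h [k [_ [_ Hi]]]]].
  destruct (Hrel _ _ _ _ _ _ _ _ Hi) as [Hc _].
  destruct (left_multiadjoint_lift_square F HF Hc)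
    as [Q [n [a [b [Hab [Ha Hb]]]]]].
  assert (Hi' : indep _ _ _ _ (fmap F f) (fmap F g) (fmap F a) (fmap F b)).
  { apply (Hsemi _ _ _ _ _ _ _ _ _ n (fmap_commutes F Hab)).
    rewrite <- Ha, <- Hb. exact Hi. }
  destruct (Hrel _ _ _ _ _ _ _ _ Hi') as [_ [_ [_ [Ma Mb]]]].
  exists Q, a, b.
  repeat split; assumption.
Qed.
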